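(* Consider the utility-minus-cost problem $$\max_{\boldsymbol{r},\boldsymbol{\phi}}\ \sum_{i\in\mathcal{V}}\sum_{a\in\mathcal{A}}U_{ia}(r_i(a))-\sum_{(i,j)\in\mathcal{E}}D_{ij}(F_{ij})-\sum_{i\in\mathcal{V}}C_i(G_i)\quad\text{s.t. } 0\le r_i(a)\le\bar r_i(a),\ \boldsymbol{r}\in\mathcal{D}_{\boldsymbol{r}},\ \boldsymbol{\phi}\in\mathcal{D}_{\boldsymbol{\phi}}(\boldsymbol{r}),$$ reparametrized by admission fractions $\phi_{i^Vi}(a),\phi_{i^Vd_a}(a)\ge0$ with $\phi_{i^Vi}(a)+\phi_{i^Vd_a}(a)=1$ and $r_i(a)=\phi_{i^Vi}(a)\,\bar r_i(a)$. Let $(\boldsymbol{r},\boldsymbol{\phi})$ with admission fractions be feasible. If $\boldsymbol{\phi}$ satisfies condition (SC) (for input $\boldsymbol{r}$), and for all $i\in\mathcal{V}$ and $a\in\mathcal{A}$, $$\frac{\partial T}{\partial t_i(a,0)}\le U'_{ia}(r_i(a))\ \text{ if }\phi_{i^Vi}(a)>0,\qquad \frac{\partial T}{\partial t_i(a,0)}\ge U'_{ia}(r_i(a))\ \text{ if }\phi_{i^Vd_a}(a)>0,$$ then $(\boldsymbol{r},\boldsymbol{\phi})$ is a global optimal solution of the utility-minus-cost problem.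
   Context: Service-chain computing network model. $\mathcal{G}=(\mathcal{V},\mathcal{E})$ is a directed, strongly connected graph whose links are bidirectional ($(i,j)\in\mathcal{E}\Rightarrow(j,i)\in\mathcal{E}$). $\mathcal{A}$ is a finite set of applications; application $a$ has a destination $d_a\in\mathcal{V}$ and a chain of $|\mathcal{T}_a|$ tasks performed in order. The set of stages is $\mathcal{S}=\{(a,k): a\in\mathcal{A}, k=0,1,\dots,|\mathcal{T}_a|\}$; stage $(a,k)$ denotes packets that have completed the first $k$ tasks of $a$, and has packet size $L_{(a,k)}>0$. Exogenous input rates are $r_i(a)\ge 0$ (stage $(a,0)$ packets injected at node $i$), $\boldsymbol{r}=[r_i(a)]$. The forwarding strategy $\boldsymbol{\phi}=[\phi_{ij}(a,k)]_{(a,k)\in\mathcal{S},i\in\mathcal{V},j\in\{0\}\cup\mathcal{V}}$ has $\phi_{ij}(a,k)\in[0,1]$; for $j\in\mathcal{V}$ it is the fraction of node $i$'s stage-$(a,k)$ traffic sent to node $j$ (with $\phi_{ij}(a,k)=0$ if $(i,j)\notin\mathcal{E}$), and $\phi_{i0}(a,k)$ is the fraction sent to $i$'s local processor, which converts each stage-$(a,k)$ packet into one stage-$(a,k+1)$ packet; $\phi_{i0}(a,|\mathcal{T}_a|)=0$. Flow conservation: $\sum_{j\in\{0\}\cup\mathcal{V}}\phi_{ij}(a,k)=0$ if $k=|\mathcal{T}_a|$ and $i=d_a$, and $=1$ otherwise. Traffic $t_i(a,k)$ satisfies $t_i(a,0)=\sum_{j\in\mathcal{V}}t_j(a,0)\phi_{ji}(a,0)+r_i(a)$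 and, for $k\ge1$, $t_i(a,k)=\sum_{j\in\mathcal{V}}t_j(a,k)\phi_{ji}(a,k)+t_i(a,k-1)\phi_{i0}(a,k-1)$. Link flows $f_{ij}(a,k)=t_i(a,k)\phi_{ij}(a,k)$, processor inputs $g_i(a,k)=t_i(a,k)\phi_{i0}(a,k)$, total link flow $F_{ij}=\sum_{(a,k)\in\mathcal{S}}L_{(a,k)}f_{ij}(a,k)$, computation workload $G_i=\sum_{(a,k)\in\mathcal{S}}w_i(a,k)g_i(a,k)$ with weights $w_i(a,k)>0$. Link costs $D_{ij}(\cdot)$ and computation costs $C_i(\cdot)$ are increasing, continuously differentiable, convex functions (possibly taking value $+\infty$ outside a domain). Total cost $T(\boldsymbol{\phi})=\sum_{(i,j)\in\mathcal{E}}D_{ij}(F_{ij})+\sum_{i\in\mathcal{V}}C_i(G_i)$. The feasible set $\mathcal{D}_{\boldsymbol{\phi}}(\boldsymbol{r})$ consists of $\boldsymbol{\phi}$ satisfying flow conservation with all $D_{ij}(F_{ij})<\infty$ and $C_i(G_i)<\infty$; $\mathcal{D}_{\boldsymbol{r}}=\{\boldsymbol{r}\ge0:\mathcal{D}_{\boldsymbol{\phi}}(\boldsymbol{r})\neq\emptyset\}$. Marginal quantities: $\partial T/\partial t_i(a,k)$ is the marginal total cost of an additional exogenous injection of stage-$(a,k)$ traffic at node $i$ (with $\boldsymbol{\phi}$ fixed); it satisfies $\partial T/\partial t_{d_a}(a,|\mathcal{T}_a|)=0$, for $k=|\mathcal{T}_a|$: $\frac{\partial T}{\partial t_i(a,k)}=\sum_{j\in\mathcal{V}}\phi_{ij}(a,k)\big(L_{(a,k)}D'_{ij}(F_{ij})+\frac{\partial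 T}{\partial t_j(a,k)}\big)$, and for $k<|\mathcal{T}_a|$: $\frac{\partial T}{\partial t_i(a,k)}=\phi_{i0}(a,k)\big(w_i(a,k)C'_i(G_i)+\frac{\partial T}{\partial t_i(a,k+1)}\big)+\sum_{j\in\mathcal{V}}\phi_{ij}(a,k)\big(L_{(a,k)}D'_{ij}(F_{ij})+\frac{\partial T}{\partial t_j(a,k)}\big)$. Modified marginals: $\delta_{ij}(a,k)=L_{(a,k)}D'_{ij}(F_{ij})+\frac{\partial T}{\partial t_j(a,k)}$ for $j\in\mathcal{V}$ with $(i,j)\in\mathcal{E}$, $\delta_{i0}(a,k)=w_i(a,k)C'_i(G_i)+\frac{\partial T}{\partial t_i(a,k+1)}$ for $k<|\mathcal{T}_a|$, and $\delta_{ij}(a,k)=\infty$ for $(i,j)\notin\mathcal{E}$ and $\delta_{i0}(a,|\mathcal{T}_a|)=\infty$. Condition (SC): for all $i\in\mathcal{V}$, $j\in\{0\}\cup\mathcal{V}$, $(a,k)\in\mathcal{S}$, $\delta_{ij}(a,k)=\min_{j'\in\{0\}\cup\mathcal{V}}\delta_{ij'}(a,k)$ if $\phi_{ij}(a,k)>0$ and $\delta_{ij}(a,k)\ge\min_{j'}\delta_{ij'}(a,k)$ if $\phi_{ij}(a,k)=0$. Congestion control: each pair $(i,a)$ has a user-specified upper limit $\bar r_i(a)\ge0$ on the admitted rate and a utility function $U_{ia}:[0,\bar r_i(a)]\to\mathbb{R}$ that is increasing, concave, continuously differentiable, with $U_{ia}(0)=0$. A virtual gateway node $i^V$ receives rate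 $\bar r_i(a)$; the fraction $\phi_{i^Vi}(a)$ is admitted to physical node $i$ (so $r_i(a)=\phi_{i^Vi}(a)\bar r_i(a)$), the fraction $\phi_{i^Vd_a}(a)$ is rejected, incurring cost $U_{ia}(\bar r_i(a))-U_{ia}(r_i(a))$. *)

From HB Require Import structures.
From mathcomp Require Import all_boot all_order all_algebra.
From mathcomp Require Import all_classical all_reals all_analysis.
Set Implicit Arguments. Unset Strict Implicit. Unset Printing Implicit Defensive.
Import Order.TTheory GRing.Theory Num.Theory.
Import numFieldNormedType.Exports.
Local Open Scope ring_scope.

Definition nondecreasing_on {R : realType} (P : R -> Prop) (f : R -> R) :=
  forall x y, P x -> P y -> x <= y -> f x <= f y.
Definition convex_on {R : realType} (P : R -> Prop) (f : R -> R) :=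
  forall x y (l : R), P x -> P y -> 0 <= l <= 1 ->
    f (l * x + (1 - l) * y) <= l * f x + (1 - l) * f y.
Definition concave_on {R : realType} (P : R -> Prop) (f : R -> R) :=
  convex_on P (fun x => - f x).
Definition C1_on {R : realType} (P : R -> Prop) (f : R -> R) :=
  forall x, P x -> derivable f x 1 /\ {for x, continuous (derive1 f)}.

(* A cost function with value f x for x < c and value +oo for x >= c
   (c = +oo allowed); on its finite domain [0, c) (flows are >= 0) it is
   increasing, convex, continuously differentiable. *)
Definition cost_dom {R : realType} (c : \bar R) (x : R) : Prop :=
  0 <= x /\ (x%:E < c)%E.
Definition cost_fun {R : realType} (f : R -> R) (c : \bar R) : Prop :=
  nondecreasing_on (cost_dom c) f /\ convex_on (cost_dom c) f /\
  C1_on (cost_dom c) f.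

Definition util_dom {R : realType} (rb : R) (x : R) : Prop := 0 <= x <= rb.
Definition utility_fun {R : realType} (U : R -> R) (rb : R) : Prop :=
  U 0 = 0 /\ nondecreasing_on (util_dom rb) U /\
  concave_on (util_dom rb) U /\ C1_on (util_dom rb) U.

Record network (R : realType) (V A : finType) := Network {
  E : rel V;
  dest : A -> V;
  ntask : A -> nat;                (* |T_a|; stages (a,k), k = 0..|T_a| *)
  Lsize : A -> nat -> R;
  wgt : V -> A -> nat -> R;
  Dl : V -> V -> R -> R;
  capD : V -> V -> \bar R;         (* D_ij = +oo for F >= capD i j *)
  Cp : V -> R -> R;
  capC : V -> \bar R;              (* C_i = +oo for G >= capC i *)
  rbar : V -> A -> R;
  Util : V -> A -> R -> R
}.

Definition network_ok {R : realType} {V A : finType} (N : network R V A) : Prop :=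
  symmetric (E N) /\ (forall i j, connect (E N) i j) /\
  (forall a k, (k <= ntask N a)%N -> 0 < Lsize N a k) /\
  (forall i a k, (k <= ntask N a)%N -> 0 < wgt N i a k) /\
  (forall i j, E N i j -> cost_fun (Dl N i j) (capD N i j)) /\
  (forall i, cost_fun (Cp N i) (capC N i)) /\
  (forall i a, 0 <= rbar N i a) /\
  (forall i a, utility_fun (Util N i a) (rbar N i a)).

Section Model.
Variables (R : realType) (V A : finType) (N : network R V A).

(* phi a k i j = phi_ij(a,k) (j in V), phi0 a k i = phi_i0(a,k) (processor),
   t a k i = t_i(a,k), r i a = r_i(a). *)
Definition Flow (phi : A -> nat -> V -> V -> R) (t : A -> nat -> V -> R)
    (i j : V) : R :=
  \sum_(a : A) \sum_(k < (ntask N a).+1) Lsize N a k * (t a k i * phi a k i j).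

Definition Work (phi0 : A -> nat -> V -> R) (t : A -> nat -> V -> R)
    (i : V) : R :=
  \sum_(a : A) \sum_(k < (ntask N a).+1) wgt N i a k * (t a k i * phi0 a k i).

Definition feasible (r : V -> A -> R) (phi : A -> nat -> V -> V -> R)
    (phi0 : A -> nat -> V -> R) (t : A -> nat -> V -> R) : Prop :=
  (forall a k i j, (k <= ntask N a)%N -> 0 <= phi a k i j <= 1) /\
  (forall a k i, (k <= ntask N a)%N -> 0 <= phi0 a k i <= 1) /\
  (forall a k i j, (k <= ntask N a)%N -> ~~ E N i j -> phi a k i j = 0) /\
  (forall a i, phi0 a (ntask N a) i = 0) /\
  (forall a k i, (k <= ntask N a)%N ->
     phi0 a k i + \sum_(j : V) phi a k i j =
       if (k == ntask N a) && (i == dest N a) then 0 else 1) /\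
  (forall a k i, (k <= ntask N a)%N -> 0 <= t a k i) /\
  (forall a i, t a 0%N i = \sum_(j : V) t a 0%N j * phi a 0%N j i + r i a) /\
  (forall a k i, (0 < k <= ntask N a)%N ->
     t a k i = \sum_(j : V) t a k j * phi a k j i + t a k.-1 i * phi0 a k.-1 i) /\
  (forall i j, E N i j -> (Flow phi t i j)%:E < capD N i j)%E /\
  (forall i, (Work phi0 t i)%:E < capC N i)%E.

Definition objective (r : V -> A -> R) (phi : A -> nat -> V -> V -> R)
    (phi0 : A -> nat -> V -> R) (t : A -> nat -> V -> R) : R :=
  \sum_(i : V) \sum_(a : A) Util N i a (r i a)
  - \sum_(i : V) \sum_(j : V | E N i j) Dl N i j (Flow phi t i j)
  - \sum_(i : V) Cp N i (Work phi0 t i).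

(* modified marginals (finite parts), with p a k i = dT/dt_i(a,k) *)
Definition dlink (phi : A -> nat -> V -> V -> R) (phi0 : A -> nat -> V -> R)
    (t : A -> nat -> V -> R) (p : A -> nat -> V -> R) a k i j : R :=
  Lsize N a k * derive1 (Dl N i j) (Flow phi t i j) + p a k j.
Definition dproc (phi : A -> nat -> V -> V -> R) (phi0 : A -> nat -> V -> R)
    (t : A -> nat -> V -> R) (p : A -> nat -> V -> R) a k i : R :=
  wgt N i a k * derive1 (Cp N i) (Work phi0 t i) + p a k.+1 i.

Definition marginals (phi : A -> nat -> V -> V -> R) (phi0 : A -> nat -> V -> R)
    (t : A -> nat -> V -> R) (p : A -> nat -> V -> R) : Prop :=
  (forall a, p a (ntask N a) (dest N a) = 0) /\
  (forall a i, p a (ntask N a) i =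
     \sum_(j : V) phi a (ntask N a) i j * dlink phi phi0 t p a (ntask N a) i j) /\
  (forall a k i, (k < ntask N a)%N -> p a k i =
     phi0 a k i * dproc phi phi0 t p a k i
     + \sum_(j : V) phi a k i j * dlink phi phi0 t p a k i j).

Definition delta_link phi phi0 t p a k i j : \bar R :=
  if E N i j then (dlink phi phi0 t p a k i j)%:E else +oo%E.
Definition delta_proc phi phi0 t p a k i : \bar R :=
  if (k < ntask N a)%N then (dproc phi phi0 t p a k i)%:E else +oo%E.
Definition delta_min phi phi0 t p a k i : \bar R :=
  Order.min (delta_proc phi phi0 t p a k i)
            (\big[Order.min/+oo%E]_(j : V) delta_link phi phi0 t p a k i j).

Definition SC (phi : A -> nat -> V -> V -> R) (phi0 : A -> nat -> V -> R)
    (t : A -> nat -> V -> R) (p : A -> nat -> V -> R) : Prop :=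
  forall a k i, (k <= ntask N a)%N ->
    (forall j,
      (0 < phi a k i j -> delta_link phi phi0 t p a k i j = delta_min phi phi0 t p a k i) /\
      (phi a k i j = 0 -> (delta_min phi phi0 t p a k i <= delta_link phi phi0 t p a k i j)%E)) /\
    (0 < phi0 a k i -> delta_proc phi phi0 t p a k i = delta_min phi phi0 t p a k i) /\
    (phi0 a k i = 0 -> (delta_min phi phi0 t p a k i <= delta_proc phi phi0 t p a k i)%E).

End Model.

(* At the candidate point, (SC) says that traffic leaves each node only along
   directions of minimal modified marginal, so dT/dt_i(a,k) equals that minimum.
   Pricing the flows of any other feasible point at the marginal costs of the
   candidate and telescoping flow conservation along the stages, the priced cost
   equals the marginal value of the admitted input plus a routing excess, which is
   nonnegative by (SC) and vanishes at the candidate. Convexity of the costs and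
   concavity of the utilities turn this first-order comparison into a global one,
   and the conditions on U' make admitting r_i(a) optimal at price dT/dt_i(a,0). *)

From HB Require Import structures.
From mathcomp Require Import all_boot all_order all_algebra.
From mathcomp Require Import all_classical all_reals all_analysis.
From mathcomp Require Import ring lra.
Set Implicit Arguments.
Unset Strict Implicit.
Unset Printing Implicit Defensive.
Import Order.TTheory GRing.Theory Num.Theory.
Import numFieldNormedType.Exports.
Local Open Scope ring_scope.

Section Tangent.
Local Open Scope classical_set_scope.

Lemma convex_on_tangent_le (R : realType) (P : R -> Prop) (f : R -> R) x y :
  convex_on P f -> P x -> P y -> derivable f x 1 ->
  derive1 f x * (y - x) <= f y - f x.
Proof.
move=> cf Px Py df.
have dq : (fun h : R => h^-1 *: ((f \o shift x) (h *: 1) - f x)) @ 0^' --> derive1 f x.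
  by rewrite derive1E; exact: df.
(* On the side of y, the difference quotient at x is bounded by the chord slope. *)
have chord h : 0 < h / (y - x) <= 1 -> f (h + x) - f x <= h / (y - x) * (f y - f x).
  move=> /andP[l0 l1].
  have := cf y x (h / (y - x)) Py Px.
  rewrite (ltW l0) l1 => /(_ isT).
  have -> : h / (y - x) * y + (1 - h / (y - x)) * x = h + x.
    have yx : y - x != 0.
      by apply/negP => /eqP e; move: l0; rewrite e invr0 mulr0 ltxx.
    by field.
  lra.
have [xy|yx|->] := ltgtP x y; last by rewrite subrr mulr0 subrr.
- have yx0 : 0 < y - x by lra.
  rewrite -ler_pdivlMr //.
  apply: (cvgr_to_le (cvg_dnbhs_at_right dq)).
  near=> h.
  have h0 : 0 < h by near: h; exact: nbhs_right_gt.
  have h1 : h < y - x by near: h; exact: nbhs_right_lt.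
  rewrite /= -[h%:A]/(h * 1) mulr1 -[_ *: _]/(_ * _).
  have := chord h; rewrite divr_gt0 // ler_pdivrMr // mul1r (ltW h1) => /(_ isT) H.
  apply: (le_trans (ler_wpM2l _ H)); first by rewrite invr_ge0 ltW.
  by rewrite le_eqVlt; apply/orP; left; apply/eqP; field; rewrite !gt_eqF.
- have yx0 : y - x < 0 by lra.
  rewrite -ler_ndivrMr //.
  apply: (cvgr_to_ge (cvg_dnbhs_at_left dq)).
  near=> h.
  have h0 : h < 0 by near: h; exact: nbhs_left_lt.
  have h1 : y - x < h by near: h; exact: nbhs_left_gt.
  rewrite /= -[h%:A]/(h * 1) mulr1 -[_ *: _]/(_ * _).
  have := chord h; rewrite ltr_ndivlMr // mul0r h0 ler_ndivrMr // mul1r (ltW h1).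
  move=> /(_ isT) H; apply: le_trans (ler_wnM2l _ H); last by rewrite invr_le0 ltW.
  by rewrite le_eqVlt; apply/orP; left; apply/eqP; field; rewrite !lt_eqF.
Unshelve. all: end_near.
Qed.

End Tangent.

Lemma concave_on_tangent_ge (R : realType) (P : R -> Prop) (f : R -> R) x y :
  concave_on P f -> P x -> P y -> derivable f x 1 ->
  f y - f x <= derive1 f x * (y - x).
Proof.
move=> cf Px Py df.
have := @convex_on_tangent_le R P (- f) x y cf Px Py (derivableN df).
rewrite derive1N // -[(- f) y]/(- f y) -[(- f) x]/(- f x); lra.
Qed.

Lemma cost_fun_tangent_le (R : realType) (f : R -> R) (c : \bar R) x y :
  cost_fun f c -> cost_dom c x -> cost_dom c y ->
  f x + derive1 f x * (y - x) <= f y.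
Proof.
move=> [_ [cvx C1]] Px Py.
have := convex_on_tangent_le cvx Px Py (C1 x Px).1; lra.
Qed.

Lemma utility_le_linearization (R : realType) (U : R -> R) (rb adm rej q x : R) :
  utility_fun U rb -> 0 <= adm -> 0 <= rej -> adm + rej = 1 ->
  (0 < adm -> q <= derive1 U (adm * rb)) ->
  (0 < rej -> derive1 U (adm * rb) <= q) ->
  0 <= x <= rb -> U x <= U (adm * rb) + q * (x - adm * rb).
Proof.
move=> [_ [_ [ccv C1]]] adm0 rej0 sum1 Hadm Hrej /andP[x0 xrb].
have rb0 : 0 <= rb by apply: le_trans xrb.
have Pr : util_dom rb (adm * rb).
  by rewrite /util_dom mulr_ge0 //= ler_piMl //; lra.
have Px : util_dom rb x by rewrite /util_dom x0 xrb.
have := concave_on_tangent_ge ccv Pr Px (C1 _ Pr).1.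
set r := adm * rb; set d := derive1 U r.
suff : d * (x - r) <= q * (x - r) by lra.
have [lt|gt|->] := ltgtP r x; last by rewrite subrr !mulr0.
- (* admitting more than [r] requires some rejected traffic *)
  apply: ler_wpM2r; first lra.
  apply: Hrej; rewrite lt_neqAle rej0 andbT; apply/eqP => rej_eq0.
  by move: lt; rewrite /r (_ : adm = 1) ?mul1r; [rewrite ltNge xrb | lra].
- apply: ler_wnM2r; first lra.
  apply: Hadm; rewrite lt_neqAle adm0 andbT; apply/eqP => adm_eq0.
  by move: gt; rewrite /r -adm_eq0 mul0r ltNge x0.
Qed.

Lemma stage_telescope (R : comPzRingType) (V : finType) (n : nat)
    (t : nat -> V -> R) (ps : nat -> V -> V -> R) (ps0 : nat -> V -> R)
    (q : nat -> V -> R) (r : V -> R) :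
  (forall j, t 0%N j = \sum_i t 0%N i * ps 0%N i j + r j) ->
  (forall k j, (0 < k <= n)%N ->
     t k j = \sum_i t k i * ps k i j + t k.-1 j * ps0 k.-1 j) ->
  (forall i, ps0 n i = 0) ->
  \sum_(k < n.+1) \sum_i (t k i * ps0 k i * q k.+1 i
     + \sum_j t k i * ps k i j * q k j - t k i * q k i)
  = - \sum_i q 0%N i * r i.
Proof.
move=> t0 tk ps0n.
(* [out k]: value of the processor output of stage [k];
   [inj k]: value of the traffic entering stage [k] from outside its links *)
pose out k := \sum_i t k i * ps0 k i * q k.+1 i.
pose inj k := if k == 0%N then \sum_i q 0%N i * r i else out k.-1.
have stage (k : 'I_n.+1) : \sum_i (t k i * ps0 k i * q k.+1 i
     + \sum_j t k i * ps k i j * q k j - t k i * q k i) = out k - inj k.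
  have routed : \sum_i \sum_j t k i * ps k i j * q k j = \sum_j t k j * q k j - inj k.
    rewrite exchange_big /=.
    transitivity (\sum_j (\sum_i t k i * ps k i j) * q k j).
      by apply: eq_bigr => j _; rewrite mulr_suml.
    rewrite /inj; case: eqP => [k0|kn0].
    - by rewrite -sumrB; apply: eq_bigr => j _; rewrite k0 (t0 j); ring.
    - have kpos : (0 < k)%N by case: (nat_of_ord k) kn0.
      rewrite /out prednK // -sumrB; apply: eq_bigr => j _.
      rewrite (tk k j); first ring.
      by rewrite kpos -ltnS ltn_ord.
  by rewrite !big_split /= sumrN routed -/(out k); ring.
rewrite (eq_bigr _ (fun k _ => stage k)) sumrB.
rewrite [X in X - _]big_ord_recr [X in _ - X]big_ord_recl /= /inj /= /out.
rewrite [X in _ + X - _]big1 => [|i _]; last by rewrite ps0n mulr0 mul0r.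
by rewrite addr0 opprD addrCA subrr addr0.
Qed.

Section Model.
Variables (R : realType) (V A : finType) (N : network R V A).
Hypothesis HN : network_ok N.

Lemma Flow_ge0 r phi phi0 t : feasible N r phi phi0 t -> forall i j, 0 <= Flow N phi t i j.
Proof.
have [_ [_ [HL _]]] := HN; move=> [Hphi [_ [_ [_ [_ [Ht _]]]]]] i j.
apply: sumr_ge0 => a _; apply: sumr_ge0 => k _.
have hk : (k <= ntask N a)%N by rewrite -ltnS.
rewrite mulr_ge0 ?mulr_ge0 ?Ht ?(ltW (HL _ _ hk)) //.
by have /andP[] := Hphi a k i j hk.
Qed.

Lemma Work_ge0 r phi phi0 t : feasible N r phi phi0 t -> forall i, 0 <= Work N phi0 t i.
Proof.
have [_ [_ [_ [Hw _]]]] := HN; move=> [_ [Hphi0 [_ [_ [_ [Ht _]]]]]] i.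
apply: sumr_ge0 => a _; apply: sumr_ge0 => k _.
have hk : (k <= ntask N a)%N by rewrite -ltnS.
rewrite mulr_ge0 ?mulr_ge0 ?Ht ?(ltW (Hw _ _ _ hk)) //.
by have /andP[] := Hphi0 a k i hk.
Qed.

Definition total_cost phi phi0 t : R :=
  \sum_i \sum_(j | E N i j) Dl N i j (Flow N phi t i j) + \sum_i Cp N i (Work N phi0 t i).

Lemma objectiveE r phi phi0 t :
  objective N r phi phi0 t = \sum_i \sum_a Util N i a (r i a) - total_cost phi phi0 t.
Proof. by rewrite /objective /total_cost opprD addrA. Qed.

Lemma sum_utility_le adm rej (p : A -> nat -> V -> R) r' :
  (forall i a, 0 <= adm i a /\ 0 <= rej i a /\ adm i a + rej i a = 1) ->
  (forall i a,
     (0 < adm i a -> p a 0%N i <= derive1 (Util N i a) (adm i a * rbar N i a)) /\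
     (0 < rej i a -> derive1 (Util N i a) (adm i a * rbar N i a) <= p a 0%N i)) ->
  (forall i a, 0 <= r' i a <= rbar N i a) ->
  \sum_i \sum_a Util N i a (r' i a)
  <= \sum_i \sum_a Util N i a (adm i a * rbar N i a)
     + (\sum_i \sum_a p a 0%N i * r' i a - \sum_i \sum_a p a 0%N i * (adm i a * rbar N i a)).
Proof.
have [_ [_ [_ [_ [_ [_ [_ HU]]]]]]] := HN; move=> Hadm Hprice Hr'.
rewrite -!sumrB -big_split /=; apply: ler_sum => i _.
rewrite -!sumrB -big_split /=; apply: ler_sum => a _.
have [adm0 [rej0 sum1]] := Hadm i a; have [Hp_adm Hp_rej] := Hprice i a.
rewrite -mulrBr.
exact: utility_le_linearization (HU i a) adm0 rej0 sum1 Hp_adm Hp_rej (Hr' i a).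
Qed.

Section Linearization.
Variables (rr : V -> A -> R) (phi : A -> nat -> V -> V -> R).
Variables (phi0 t : A -> nat -> V -> R).
Hypothesis Hfeas : feasible N rr phi phi0 t.

(* the flows of [(ps, ps0, t1)] priced at the marginal costs of [(phi, phi0, t)] *)
Definition lin_cost ps ps0 t1 : R :=
  \sum_i \sum_(j | E N i j) derive1 (Dl N i j) (Flow N phi t i j) * Flow N ps t1 i j
  + \sum_i derive1 (Cp N i) (Work N phi0 t i) * Work N ps0 t1 i.

Lemma total_cost_tangent_le r1 ps ps0 t1 : feasible N r1 ps ps0 t1 ->
  total_cost phi phi0 t + (lin_cost ps ps0 t1 - lin_cost phi phi0 t) <= total_cost ps ps0 t1.
Proof.
move=> Hf1; have [_ [_ [_ [_ [HD [HC _]]]]]] := HN.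
have [_ [_ [_ [_ [_ [_ [_ [_ [HF HG]]]]]]]]] := Hfeas.
have [_ [_ [_ [_ [_ [_ [_ [_ [HF1 HG1]]]]]]]]] := Hf1.
have links : \sum_i \sum_(j | E N i j) Dl N i j (Flow N phi t i j)
   + (\sum_i \sum_(j | E N i j) derive1 (Dl N i j) (Flow N phi t i j) * Flow N ps t1 i j
      - \sum_i \sum_(j | E N i j) derive1 (Dl N i j) (Flow N phi t i j) * Flow N phi t i j)
   <= \sum_i \sum_(j | E N i j) Dl N i j (Flow N ps t1 i j).
  rewrite -!sumrB -big_split /=; apply: ler_sum => i _.
  rewrite -!sumrB -big_split /=; apply: ler_sum => j ej.
  rewrite -mulrBr; apply: (cost_fun_tangent_le (HD i j ej)).
  - by split; [exact: (Flow_ge0 Hfeas i j) | exact: HF i j ej].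
  - by split; [exact: (Flow_ge0 Hf1 i j) | exact: HF1 i j ej].
have procs : \sum_i Cp N i (Work N phi0 t i)
   + (\sum_i derive1 (Cp N i) (Work N phi0 t i) * Work N ps0 t1 i
      - \sum_i derive1 (Cp N i) (Work N phi0 t i) * Work N phi0 t i)
   <= \sum_i Cp N i (Work N ps0 t1 i).
  rewrite -!sumrB -big_split /=; apply: ler_sum => i _.
  rewrite -mulrBr; apply: (cost_fun_tangent_le (HC i)).
  - by split; [exact: (Work_ge0 Hfeas i) | exact: HG i].
  - by split; [exact: (Work_ge0 Hf1 i) | exact: HG1 i].
move: links procs; rewrite /total_cost /lin_cost; lra.
Qed.

Lemma lin_cost_stage_sum r1 ps ps0 t1 : feasible N r1 ps ps0 t1 ->
  lin_cost ps ps0 t1 = \sum_a \sum_(k < (ntask N a).+1) \sum_i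
    (\sum_j Lsize N a k * derive1 (Dl N i j) (Flow N phi t i j) * (t1 a k i * ps a k i j)
     + wgt N i a k * derive1 (Cp N i) (Work N phi0 t i) * (t1 a k i * ps0 a k i)).
Proof.
move=> [_ [_ [Hne1 _]]].
have links : \sum_i \sum_(j | E N i j) derive1 (Dl N i j) (Flow N phi t i j) * Flow N ps t1 i j
  = \sum_a \sum_(k < (ntask N a).+1) \sum_i
      \sum_j Lsize N a k * derive1 (Dl N i j) (Flow N phi t i j) * (t1 a k i * ps a k i j).
  transitivity (\sum_i \sum_a \sum_(k < (ntask N a).+1) \sum_j
      Lsize N a k * derive1 (Dl N i j) (Flow N phi t i j) * (t1 a k i * ps a k i j)); last first.
    by rewrite exchange_big /=; apply: eq_bigr => a _; exact: exchange_big.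
  apply: eq_bigr => i _; rewrite big_mkcond /=.
  transitivity (\sum_j \sum_a \sum_(k < (ntask N a).+1)
      Lsize N a k * derive1 (Dl N i j) (Flow N phi t i j) * (t1 a k i * ps a k i j)); last first.
    by rewrite exchange_big /=; apply: eq_bigr => a _; exact: exchange_big.
  apply: eq_bigr => j _; case: ifP => eij.
    rewrite /Flow mulr_sumr; apply: eq_bigr => a _; rewrite mulr_sumr.
    by apply: eq_bigr => k _; ring.
  rewrite big1 // => a _; rewrite big1 // => k _.
  by rewrite Hne1 ?eij ?mulr0 // -ltnS.
have procs : \sum_i derive1 (Cp N i) (Work N phi0 t i) * Work N ps0 t1 i
  = \sum_a \sum_(k < (ntask N a).+1) \sum_i
      wgt N i a k * derive1 (Cp N i) (Work N phi0 t i) * (t1 a k i * ps0 a k i).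
  transitivity (\sum_i \sum_a \sum_(k < (ntask N a).+1)
      wgt N i a k * derive1 (Cp N i) (Work N phi0 t i) * (t1 a k i * ps0 a k i)); last first.
    by rewrite exchange_big /=; apply: eq_bigr => a _; exact: exchange_big.
  apply: eq_bigr => i _; rewrite /Work mulr_sumr; apply: eq_bigr => a _.
  by rewrite mulr_sumr; apply: eq_bigr => k _; ring.
rewrite /lin_cost links procs -big_split /=; apply: eq_bigr => a _.
by rewrite -big_split /=; apply: eq_bigr => k _; rewrite -big_split.
Qed.

Variable p : A -> nat -> V -> R.

Definition excess ps ps0 a k i : R :=
  ps0 a k i * dproc N phi phi0 t p a k i
  + \sum_j ps a k i j * dlink N phi phi0 t p a k i j - p a k i.

(* Telescoping flow conservation along the stages leaves only the exogenous input. *)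
Lemma lin_cost_excess r1 ps ps0 t1 : feasible N r1 ps ps0 t1 ->
  lin_cost ps ps0 t1 - \sum_i \sum_a p a 0%N i * r1 i a
  = \sum_a \sum_(k < (ntask N a).+1) \sum_i t1 a k i * excess ps ps0 a k i.
Proof.
move=> Hf1; rewrite (lin_cost_stage_sum Hf1).
have [_ [_ [_ [Hfin1 [_ [_ [Ht0 [Htk _]]]]]]]] := Hf1.
have telescope : \sum_a \sum_(k < (ntask N a).+1) \sum_i
    (t1 a k i * ps0 a k i * p a k.+1 i + \sum_j t1 a k i * ps a k i j * p a k j
     - t1 a k i * p a k i) = - \sum_i \sum_a p a 0%N i * r1 i a.
  rewrite exchange_big /= -sumrN; apply: eq_bigr => a _.
  apply: (@stage_telescope _ _ _ (t1 a) (ps a) (ps0 a) (p a) (fun j => r1 j a)).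
  - exact: Ht0.
  - exact: Htk.
  - exact: Hfin1.
rewrite -telescope -big_split /=; apply: eq_bigr => a _.
rewrite -big_split /=; apply: eq_bigr => k _; rewrite -big_split /=.
apply: eq_bigr => i _; rewrite /excess /dproc /dlink mulrBr mulrDr mulr_sumr.
have routed : \sum_j t1 a k i * (ps a k i j
      * (Lsize N a k * derive1 (Dl N i j) (Flow N phi t i j) + p a k j))
  = \sum_j Lsize N a k * derive1 (Dl N i j) (Flow N phi t i j) * (t1 a k i * ps a k i j)
    + \sum_j t1 a k i * ps a k i j * p a k j.
  by rewrite -big_split /=; apply: eq_bigr => j _; ring.
by rewrite routed; ring.
Qed.

Hypotheses (Hp : marginals N phi phi0 t p) (HSC : SC N phi phi0 t p).

Lemma marginal_stageE a k i : (k <= ntask N a)%N ->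
  p a k i = phi0 a k i * dproc N phi phi0 t p a k i
            + \sum_j phi a k i j * dlink N phi phi0 t p a k i j.
Proof.
have [_ [_ [_ [Hfin _]]]] := Hfeas; have [_ [Hpn Hpk]] := Hp.
move=> hk; have [kn|kn] := ltnP k (ntask N a); first exact: Hpk.
have -> : k = ntask N a by apply/eqP; rewrite eqn_leq hk kn.
by rewrite Hfin mul0r add0r.
Qed.

Lemma excess_self a k i : (k <= ntask N a)%N -> excess phi phi0 a k i = 0.
Proof. by move=> hk; rewrite /excess -marginal_stageE // subrr. Qed.

Lemma link_active_edge a k i j : (k <= ntask N a)%N -> 0 < phi a k i j -> E N i j.
Proof.
have [_ [_ [Hne _]]] := Hfeas; move=> hk hj.
by apply/negPn/negP => nej; move: hj; rewrite Hne // ltxx.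
Qed.

Lemma proc_active_lt a k i : (k <= ntask N a)%N -> 0 < phi0 a k i -> (k < ntask N a)%N.
Proof.
have [_ [_ [_ [Hfin _]]]] := Hfeas; move=> hk.
by rewrite ltn_neqAle hk andbT; apply: contraTN => /eqP ->; rewrite Hfin ltxx.
Qed.

Lemma delta_min_finite a k i : (k <= ntask N a)%N ->
  ~~ ((k == ntask N a) && (i == dest N a)) ->
  exists c : R, delta_min N phi phi0 t p a k i = c%:E.
Proof.
have [Hphi [Hphi0 [_ [_ [Hsum _]]]]] := Hfeas; move=> hk nd.
have [Hlink [Hproc _]] := @HSC a k i hk.
have [h0|h0] := ltP 0 (phi0 a k i).
  exists (dproc N phi phi0 t p a k i).
  by rewrite -(Hproc h0) /delta_proc (proc_active_lt hk h0).
have [[j hj]|nolink] := pselect (exists j, 0 < phi a k i j).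
  exists (dlink N phi phi0 t p a k i j).
  by rewrite -((Hlink j).1 hj) /delta_link (link_active_edge hk hj).
(* otherwise no traffic would leave node i, contradicting flow conservation *)
exfalso; have := Hsum a k i hk; rewrite (negbTE nd).
have -> : phi0 a k i = 0 by apply/le_anti; rewrite h0 (andP (Hphi0 a k i hk)).1.
rewrite big1 ?addr0 => [/eqP|j _]; first by rewrite eq_sym oner_eq0.
apply/le_anti; rewrite (andP (Hphi a k i j hk)).1 andbT leNgt.
by apply/negP => hj; apply: nolink; exists j.
Qed.

Lemma delta_min_marginal a k i : (k <= ntask N a)%N ->
  ~~ ((k == ntask N a) && (i == dest N a)) ->
  delta_min N phi phi0 t p a k i = (p a k i)%:E.
Proof.
have [Hphi [Hphi0 [_ [_ [Hsum _]]]]] := Hfeas; move=> hk nd.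
have [Hlink [Hproc _]] := @HSC a k i hk.
have [c mc] := delta_min_finite hk nd.
have procE : phi0 a k i * dproc N phi phi0 t p a k i = phi0 a k i * c.
  have [h0|h0] := ltP 0 (phi0 a k i).
    by have := Hproc h0; rewrite /delta_proc (proc_active_lt hk h0) mc => -[->].
  have -> : phi0 a k i = 0 by apply/le_anti; rewrite h0 (andP (Hphi0 a k i hk)).1.
  by rewrite !mul0r.
have linkE j : phi a k i j * dlink N phi phi0 t p a k i j = phi a k i j * c.
  have [h0|h0] := ltP 0 (phi a k i j).
    by have := (Hlink j).1 h0; rewrite /delta_link (link_active_edge hk h0) mc => -[->].
  have -> : phi a k i j = 0 by apply/le_anti; rewrite h0 (andP (Hphi a k i j hk)).1.
  by rewrite !mul0r.
rewrite mc (marginal_stageE i hk) procE (eq_bigr _ (fun j _ => linkE j)).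
by rewrite -mulr_suml -mulrDl Hsum // (negbTE nd) mul1r.
Qed.

Lemma excess_ge0 r1 ps ps0 t1 : feasible N r1 ps ps0 t1 ->
  forall a k i, (k <= ntask N a)%N -> 0 <= excess ps ps0 a k i.
Proof.
move=> [Hps [Hps0 [Hne1 [Hfin1 [Hsum1 _]]]]] a k i hk; rewrite /excess subr_ge0.
have [/andP[/eqP ek /eqP ei]|nd] := boolP ((k == ntask N a) && (i == dest N a)).
  have [Hpd _] := Hp; rewrite ek ei Hpd Hfin1 mul0r add0r.
  have s0 : \sum_j ps a (ntask N a) (dest N a) j = 0.
    by have := Hsum1 a _ (dest N a) (leqnn _); rewrite Hfin1 add0r !eqxx.
  rewrite big1 // => j _; rewrite (psumr_eq0P _ s0) ?mul0r // => j' _.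
  by have /andP[] := Hps a _ (dest N a) j' (leqnn _).
have m_eq := delta_min_marginal hk nd.
have le_proc : (delta_min N phi phi0 t p a k i <= delta_proc N phi phi0 t p a k i)%E.
  by rewrite /delta_min ge_min lexx.
have le_link j : (delta_min N phi phi0 t p a k i <= delta_link N phi phi0 t p a k i j)%E.
  by rewrite /delta_min ge_min bigmin_le orbT.
have sum1 : ps0 a k i + \sum_j ps a k i j = 1 by rewrite Hsum1 // (negbTE nd).
rewrite -[X in X <= _]mul1r -sum1 mulrDl mulr_suml.
apply: lerD.
  have [kn|kn] := ltnP k (ntask N a); last first.
    rewrite (_ : k = ntask N a) ?Hfin1 ?mul0r //.
    by apply/eqP; rewrite eqn_leq hk kn.
  apply: ler_wpM2l; first by have /andP[] := Hps0 a k i hk.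
  by move: le_proc; rewrite m_eq /delta_proc kn lee_fin.
apply: ler_sum => j _; have [ej|nej] := boolP (E N i j); last by rewrite Hne1 ?mul0r.
apply: ler_wpM2l; first by have /andP[] := Hps a k i j hk.
by move: (le_link j); rewrite m_eq /delta_link ej lee_fin.
Qed.

Lemma lin_cost_gain r1 ps ps0 t1 : feasible N r1 ps ps0 t1 ->
  \sum_i \sum_a p a 0%N i * r1 i a - \sum_i \sum_a p a 0%N i * rr i a
  <= lin_cost ps ps0 t1 - lin_cost phi phi0 t.
Proof.
move=> Hf1.
have self : lin_cost phi phi0 t = \sum_i \sum_a p a 0%N i * rr i a.
  apply/eqP; rewrite -subr_eq0 (lin_cost_excess Hfeas); apply/eqP.
  apply: big1 => a _; apply: big1 => k _; apply: big1 => i _.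
  by rewrite excess_self ?mulr0 // -ltnS.
have gain : \sum_i \sum_a p a 0%N i * r1 i a <= lin_cost ps ps0 t1.
  rewrite -subr_ge0 (lin_cost_excess Hf1).
  have [_ [_ [_ [_ [_ [Ht1 _]]]]]] := Hf1.
  apply: sumr_ge0 => a _; apply: sumr_ge0 => k _; apply: sumr_ge0 => i _.
  have hk : (k <= ntask N a)%N by rewrite -ltnS.
  by rewrite mulr_ge0 ?Ht1 ?(excess_ge0 Hf1).
by rewrite self; lra.
Qed.

End Linearization.
End Model.

Theorem theorem5 (R : realType) (V A : finType) (N : network R V A)
  (HN : network_ok N)
  (phi : A -> nat -> V -> V -> R) (phi0 : A -> nat -> V -> R)
  (t : A -> nat -> V -> R)
  (adm rej : V -> A -> R)
  (p : A -> nat -> V -> R)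
  (Hadm : forall i a, 0 <= adm i a /\ 0 <= rej i a /\ adm i a + rej i a = 1)
  (Hfeas : feasible N (fun i a => adm i a * rbar N i a) phi phi0 t)
  (Hp : marginals N phi phi0 t p)
  (HSC : SC N phi phi0 t p)
  (HU : forall i a,
     (0 < adm i a -> p a 0%N i <= derive1 (Util N i a) (adm i a * rbar N i a)) /\
     (0 < rej i a -> derive1 (Util N i a) (adm i a * rbar N i a) <= p a 0%N i)) :
  forall (r' : V -> A -> R) (phi' : A -> nat -> V -> V -> R)
         (phi0' : A -> nat -> V -> R) (t' : A -> nat -> V -> R),
    (forall i a, 0 <= r' i a <= rbar N i a) ->
    feasible N r' phi' phi0' t' ->
    objective N r' phi' phi0' t' <= objective N (fun i a => adm i a * rbar N i a) phi phi0 t.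
Proof.
move=> r' phi' phi0' t' Hr' Hf'.
have utility := sum_utility_le HN Hadm HU Hr'.
have cost := total_cost_tangent_le HN Hfeas Hf'.
have gain := lin_cost_gain Hfeas Hp HSC Hf'.
rewrite !objectiveE /=; lra.
Qed.
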